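(* For every simple game $v$ on $n\ge 2$ players and every player $i$ that is not a dictator in $v$, we have $\mathrm{BZI}_i(v)\le\frac{2^{n-1}-1}{2^{n-1}+n-2}$.
   Context: A simple game on $N=\{1,\dots,n\}$ is a surjective, monotone map $v\colon 2^N\to\{0,1\}$ (monotone: $v(S)\le v(T)$ whenever $S\subseteq T$). Player $j$ is a null player if $v(S)=v(S\cup\{j\})$ for all $S\subseteq N\setminus\{j\}$; player $i$ is a dictator if $v(\{i\})=1$ and all other players are null players. Penrose–Banzhaf index: with $\psi_j(v)=\sum_{S\subseteq N\setminus\{j\}}(v(S\cup\{j\})-v(S))$, $\mathrm{BZI}_i(v)=\psi_i(v)/\sum_{j\in N}\psi_j(v)$. *)

From mathcomp Require Import all_boot all_order all_algebra.
Set Implicit Arguments. Unset Strict Implicit. Unset Printing Implicit Defensive.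
Import GRing.Theory Num.Theory.

(* A game on players 'I_n (= {1..n} shifted to {0..n-1}) is v : {set 'I_n} -> bool. *)
Definition monotone_game n (v : {set 'I_n} -> bool) : Prop :=
  forall S T : {set 'I_n}, S \subset T -> (v S <= v T)%N.

Definition surjective_game n (v : {set 'I_n} -> bool) : Prop :=
  (exists S, v S = false) /\ (exists S, v S = true).

Definition simple_game n (v : {set 'I_n} -> bool) : Prop :=
  surjective_game v /\ monotone_game v.

Definition null_player n (v : {set 'I_n} -> bool) (j : 'I_n) : Prop :=
  forall S : {set 'I_n}, j \notin S -> v (j |: S) = v S.

Definition dictator n (v : {set 'I_n} -> bool) (i : 'I_n) : Prop :=
  v [set i] = true /\ forall j, j != i -> null_player v j.

Definition psi n (v : {set 'I_n} -> bool) (j : 'I_n) : int :=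
  \sum_(S : {set 'I_n} | j \notin S) ((v (j |: S) : nat)%:Z - (v S : nat)%:Z).

Definition BZI n (v : {set 'I_n} -> bool) (i : 'I_n) : rat :=
  (psi v i)%:~R / (\sum_(j : 'I_n) psi v j)%:~R.

(* Call a coalition S with i ∉ S a swing for i when v (S ∪ {i}) = 1 and v S = 0;
   by monotonicity psi_i(v) is the number of swings for i.  Let Z be the set of
   null players other than i, z = |Z|, and k = n - 1 - z.  Adding or removing
   members of Z changes nothing, so every coalition comes with 2^z coalitions
   of the same kind.  Hence a non-null player j ≠ i has at least 2^z swings,
   while, i not being a dictator, some S ∌ i is not a swing for i, which rules
   out 2^z of the 2^(n-1) candidates: psi_i ≤ 2^z (2^k - 1) and
   Σ_{j≠i} psi_j ≥ k 2^z.  Since (2^m - 1)/m is nondecreasing in m, this gives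
   psi_i (n - 1) ≤ (2^(n-1) - 1) Σ_{j≠i} psi_j, which is the claimed bound. *)
From mathcomp Require Import all_boot all_order all_algebra.
From mathcomp Require Import zify.
Import GRing.Theory Num.Theory.
Set Implicit Arguments. Unset Strict Implicit. Unset Printing Implicit Defensive.
Local Open Scope ring_scope.

Section Swings.
Variables (n : nat) (v : {set 'I_n} -> bool).

Definition swing (j : 'I_n) : {set {set 'I_n}} :=
  [set S : {set 'I_n} | (j \notin S) && v (j |: S) && ~~ v S].

Definition null_players : {set 'I_n} :=
  [set j | [forall S : {set 'I_n}, (j \notin S) ==> (v (j |: S) == v S)]].

Lemma null_playerP j : reflect (null_player v j) (j \in null_players).
Proof.
rewrite inE; apply: (iffP forallP) => [h S jS | h S].
  by have /implyP/(_ jS)/eqP := h S.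
by apply/implyP => jS; rewrite h.
Qed.

Lemma all_swing_dictator i :
  (forall S : {set 'I_n}, i \notin S -> S \in swing i) -> dictator v i.
Proof.
move=> hs; have swingE (S : {set 'I_n}) : i \notin S -> v (i |: S) /\ v S = false.
  by move=> iS; move: (hs S iS); rewrite inE iS => /andP [/= -> /negbTE].
split; first by have [] := swingE set0 (negbT (in_set0 i)); rewrite setU0.
move=> j ji S jS; case: (boolP (i \in S)) => iS.
  have iS' : i \notin S :\ i by rewrite !inE eqxx.
  have ijS : i \notin j |: (S :\ i) by rewrite !inE negb_or eqxx andbT eq_sym ji.
  by rewrite -(setD1K iS) setUCA (swingE _ ijS).1 (swingE _ iS').1.
have ijS : i \notin j |: S by rewrite !inE negb_or eq_sym ji.
by rewrite (swingE _ ijS).2 (swingE _ iS).2.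
Qed.

Variable Z : {set 'I_n}.
Hypothesis Z_null : {in Z, forall j, null_player v j}.

Lemma null_setUr (W S : {set 'I_n}) : W \subset Z -> v (S :|: W) = v S.
Proof.
rewrite -[W]set_enum; elim: (enum W) => [|x s IH]; first by rewrite set_nil setU0.
rewrite set_cons subUset sub1set => /andP [xZ sZ]; rewrite setUCA.
case: (boolP (x \in S :|: [set:: s])) => xS.
  by rewrite (setUidPr _) ?sub1set // IH.
by rewrite Z_null // IH.
Qed.

Lemma null_setD_eq (T T' : {set 'I_n}) : T :\: Z = T' :\: Z -> v T = v T'.
Proof.
move=> eTT'; rewrite -(setID T Z) -(setID T' Z) setUC [T' :&: Z :|: _]setUC.
by rewrite !null_setUr ?subsetIr // eTT'.
Qed.

(* The 2 ^ #|Z| coalitions (S0 \ Z) ∪ W with W ⊆ Z all lie in the class of S0. *)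
Lemma card_marginal_class (p : 'I_n) (S0 : {set 'I_n}) :
  p \notin Z -> p \notin S0 ->
  (2 ^ #|Z| <= #|[set T : {set 'I_n} |
                 (p \notin T) && (v (p |: T) == v (p |: S0)) && (v T == v S0)]|)%N.
Proof.
move=> pZ pS0; rewrite -card_powerset.
set S1 := S0 :\: Z.
have S1W_Z (W : {set 'I_n}) : W \subset Z -> (S1 :|: W) :\: Z = S1.
  move=> sWZ; apply/setP => x; rewrite !inE.
  by case: (boolP (x \in Z)) => xZ //=; rewrite (negbTE (contraNN (subsetP sWZ x) xZ)) orbF.
have inj : {in powerset Z &, injective (fun W => S1 :|: W)}.
  move=> W1 W2; rewrite !inE => sW1 sW2 eW; apply/setP => x.
  move/setP/(_ x): eW; rewrite !inE; case: (boolP (x \in Z)) => // xZ.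
  by rewrite (negbTE (contraNN (subsetP sW1 x) xZ)) (negbTE (contraNN (subsetP sW2 x) xZ)).
rewrite -(card_in_imset inj); apply/subset_leq_card/subsetP => T /imsetP [W].
rewrite powersetE => sWZ ->{T}; rewrite !inE negb_or !negb_and pS0 orbT /=.
rewrite (contraNN (subsetP sWZ p) pZ) /=.
rewrite (@null_setD_eq (p |: (S1 :|: W)) (p |: S0)) ?eqxx; last first.
  by rewrite [LHS]setDUl S1W_Z // setDUl.
by rewrite (@null_setD_eq (S1 :|: W) S0) ?eqxx // S1W_Z.
Qed.

Lemma card_swing_nondictator i :
  i \notin Z -> ~ dictator v i -> (#|swing i| + 2 ^ #|Z| <= 2 ^ n.-1)%N.
Proof.
move=> iZ not_dict.
have [S0 /andP [iS0 nsw_S0]] : exists S0 : {set 'I_n}, (i \notin S0) && (S0 \notin swing i).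
  case: (pickP [pred S : {set 'I_n} | (i \notin S) && (S \notin swing i)]) => [S0 ? | none].
    by exists S0.
  by exfalso; apply/not_dict/all_swing_dictator => S iS; move: (none S); rewrite /= iS => /negbFE.
have sub_free (T : {set 'I_n}) : i \notin T -> T \in powerset [set~ i].
  by move=> iT; rewrite inE; apply/subsetP => x xT; rewrite !inE; apply: contraNneq iT => <-.
have sw_free : swing i \subset powerset [set~ i].
  by apply/subsetP => T; rewrite inE => /andP [/andP [/sub_free]].
have card_C := card_marginal_class iZ iS0; set C := [set T | _] in card_C.
have C_nsw : C \subset powerset [set~ i] :\: swing i.
  apply/subsetP => T; rewrite inE => /andP [/andP [iT /eqP v1] /eqP v2].
  by rewrite in_setD sub_free // andbT; move: nsw_S0; rewrite !inE iS0 iT v1 v2.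
have := subset_leq_card C_nsw; rewrite cardsD (setIidPr sw_free).
rewrite card_powerset cardsC1 card_ord.
have := subset_leq_card sw_free; rewrite card_powerset cardsC1 card_ord => sw_le C_le.
by rewrite -leq_subRL //; apply: leq_trans card_C C_le.
Qed.

Hypothesis v_mono : monotone_game v.

Lemma card_swing_nonnull j :
  j \notin Z -> ~ null_player v j -> (2 ^ #|Z| <= #|swing j|)%N.
Proof.
move=> jZ /null_playerP; rewrite inE => /forallPn [S0].
rewrite negb_imply => /andP [jS0 vS0].
have [v0 v1] : v S0 = false /\ v (j |: S0) = true.
  by move: vS0 (v_mono (subsetUr [set j] S0)); case: (v S0); case: (v (j |: S0)).
apply/(leq_trans (card_marginal_class jZ jS0))/subset_leq_card/subsetP => T.
by rewrite !inE v0 v1 => /andP [/andP [-> /eqP ->] /eqP ->].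
Qed.

Lemma psi_swing j : psi v j = #|swing j|%:Z.
Proof.
rewrite /psi -sum1_card (big_morph Posz PoszD (erefl _)) big_mkcond [RHS]big_mkcond.
apply: eq_bigr => S _; rewrite inE.
move: (v_mono (subsetUr [set j] S)).
by case: (j \in S) => //=; case: (v S); case: (v (j |: S)).
Qed.

End Swings.

Lemma BZI_swing n (v : {set 'I_n} -> bool) i :
  monotone_game v ->
  BZI v i = #|swing v i|%:R / (#|swing v i| + \sum_(j | j != i) #|swing v j|)%:R.
Proof.
move=> v_mono; rewrite /BZI (bigD1 i) //= !psi_swing //.
under eq_bigr => j _ do rewrite psi_swing //.
by rewrite -(big_morph Posz PoszD (erefl _)) -PoszD -!pmulrn.
Qed.

Lemma leq_exp2_pred_mul k z :
  ((2 ^ k - 1) * (k + z) <= (2 ^ (k + z) - 1) * k)%N.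
Proof.
elim: z => [|z IH]; first by rewrite addn0 mulnC.
have exp_le : (2 ^ k <= 2 ^ (k + z))%N by rewrite leq_exp2l // leq_addr.
case: k IH exp_le => [|k] IH exp_le; first by rewrite expn0 subnn.
rewrite addnS (expnS 2 (k.+1 + z)); nia.
Qed.

Lemma leq_mul_exp2_pred a R k z :
  (a + 2 ^ z <= 2 ^ (k + z))%N -> (k * 2 ^ z <= R)%N ->
  (a * (k + z) <= (2 ^ (k + z) - 1) * R)%N.
Proof.
move=> ha hR; have pos_z : (0 < 2 ^ z)%N by rewrite expn_gt0.
have a_le : (a <= (2 ^ k - 1) * 2 ^ z)%N by move: ha; rewrite expnD; nia.
have := leq_exp2_pred_mul k z; have : (1 <= 2 ^ (k + z))%N by rewrite expn_gt0.
move: a_le hR; nia.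
Qed.

Lemma ler_ratio_nat (R : numFieldType) (a b c d : nat) :
  (0 < c + d)%N -> (a * d <= c * b)%N ->
  a%:R / (a + b)%:R <= c%:R / (c + d)%:R :> R.
Proof.
move=> cd_gt0 ad_le_cb; have [ab0 | ab_gt0] := posnP (a + b).
  have -> : a = 0%N by lia.
  by rewrite mul0r divr_ge0 ?ler0n.
rewrite ler_pdivrMr ?ltr0n // mulrAC ler_pdivlMr ?ltr0n // -!natrM ler_nat; nia.
Qed.

Theorem theorem2 (n : nat) (v : {set 'I_n} -> bool) (i : 'I_n) :
  (2 <= n)%N -> simple_game v -> ~ dictator v i ->
  (BZI v i <= ((2 ^ n.-1 - 1)%:R / (2 ^ n.-1 + n - 2)%:R : rat))%R.
Proof.
move=> n_ge2 [_ v_mono] not_dict.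
set Z := [set~ i] :&: null_players v; set K := [set~ i] :\: null_players v.
have Z_null : {in Z, forall j, null_player v j}.
  by move=> j; rewrite inE => /andP [_ /null_playerP].
have iZ : i \notin Z by rewrite !inE eqxx.
have cardKZ : (#|K| + #|Z| = n.-1)%N by rewrite addnC cardsID cardsC1 card_ord.
have swing_i := card_swing_nondictator Z_null iZ not_dict.
have swing_rest : (#|K| * 2 ^ #|Z| <= \sum_(j | j != i) #|swing v j|)%N.
  rewrite -sum_nat_const; apply: (@leq_trans (\sum_(j in K) #|swing v j|)).
    apply: leq_sum => j; rewrite inE => /andP [jN _].
    apply: (card_swing_nonnull Z_null v_mono); first by rewrite inE (negbTE jN) andbF.
    by move/null_playerP; apply/negP.
  under [X in (_ <= X)%N]eq_bigl => j do rewrite -in_setC1.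
  by rewrite [X in (_ <= X)%N](big_setID (null_players v)) /= leq_addl.
rewrite BZI_swing // (_ : (2 ^ n.-1 + n - 2 = (2 ^ n.-1 - 1) + n.-1)%N); last first.
  have : (0 < 2 ^ n.-1)%N by rewrite expn_gt0.
  lia.
apply: ler_ratio_nat; first lia.
by rewrite -cardKZ in swing_i *; apply: leq_mul_exp2_pred.
Qed.
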